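(* Let $L_5=\{-3,-2,-1,0,1\}$ with its natural linear order. Define the games $\star=\{-1\mid -3\}$, and for any game $G$: $\mathsf{M}(G)=\{1\mid G\}$, $\mathsf{P}(G)=\{G\mid -2\}$, $\mathsf{P}_\star(G)=\{G\mid \star\}$. For $n\in\mathbb{N}$ let $\mathsf{P}_n(G)=\mathsf{P}(G)$ if $n$ is odd and $\mathsf{P}_n(G)=\mathsf{P}_\star(G)$ if $n$ is even. Define $G_0=0$ (the atomic game $[0]$) and $G_{n+1}=\mathsf{M}(\mathsf{P}_n(G_n))$. Then for every $n\ge 0$, $G_{n+1}\not\le G_n$.
   Context: Games over a poset $A$ of atoms are defined inductively: for each $a\in A$, $[a]$ is a game (atomic; often written simply $a$); whenever $L,R$ are non-empty sets of games, $\{L\mid R\}$ is a game (composite), with left options the elements of $L$ and right options the elements of $R$; $\{G_1,\dots,G_n\mid H_1,\dots,H_m\}$ denotes $\{\{G_1,\dots,G_n\}\mid\{H_1,\dots,H_m\}\}$. Relations $\le$ and $\lhd$ on games are defined by mutual recursion: $G\le H$ iff (1) every left option $G^L$ of $G$ satisfies $G^L\lhd H$, (2) every right option $H^R$ of $H$ satisfies $G\lhd H^R$, and (3) if $G$ or $H$ is atomic then $G\lhd H$. $G\lhd H$ iff (1) some right option $G^R$ of $G$ satisfies $G^R\le H$, or (2) some left option $H^L$ of $H$ satisfies $G\le H^L$, or (3) $G=[a]$, $H=[b]$ are atomic with $a\le b$ in $A$. *)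

From Stdlib Require Import List Arith.
Import ListNotations.
Set Implicit Arguments.

Inductive game (A : Type) : Type :=
| Atom (a : A)
| Comp (L R : list (game A)).
Arguments Atom {A} a.
Arguments Comp {A} L R.

Definition lefts {A} (G : game A) : list (game A) :=
  match G with Atom _ => [] | Comp L _ => L end.
Definition rights {A} (G : game A) : list (game A) :=
  match G with Atom _ => [] | Comp _ R => R end.
Definition is_atom {A} (G : game A) : Prop :=
  match G with Atom _ => True | Comp _ _ => False end.

(* G <= H  and  G <| H, defined by mutual recursion (as inductive predicates;
   since games are well-founded this is the unique solution of the recursion). *)
Inductive gle {A} (leA : A -> A -> Prop) : game A -> game A -> Prop :=
| gle_intro G H :
    (forall GL, In GL (lefts G) -> glf leA GL H) ->
    (forall HR, In HR (rights H) -> glf leA G HR) ->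
    ((is_atom G \/ is_atom H) -> glf leA G H) ->
    gle leA G H
with glf {A} (leA : A -> A -> Prop) : game A -> game A -> Prop :=
| glf_right G H GR : In GR (rights G) -> gle leA GR H -> glf leA G H
| glf_left G H HL : In HL (lefts H) -> gle leA G HL -> glf leA G H
| glf_atom a b : leA a b -> glf leA (Atom a) (Atom b).

Inductive L5 : Type := m3 | m2 | m1 | z0 | p1.
Definition L5_rank (x : L5) : nat :=
  match x with m3 => 0 | m2 => 1 | m1 => 2 | z0 => 3 | p1 => 4 end.
Definition L5_le (x y : L5) : Prop := L5_rank x <= L5_rank y.

Definition G5 := game L5.
Definition star : G5 := Comp [Atom m1] [Atom m3].
Definition Mg (G : G5) : G5 := Comp [Atom p1] [G].
Definition Pg (G : G5) : G5 := Comp [G] [Atom m2].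
Definition Pstar (G : G5) : G5 := Comp [G] [star].
Definition Pn (n : nat) (G : G5) : G5 := if Nat.odd n then Pg G else Pstar G.
Fixpoint Gn (n : nat) : G5 :=
  match n with
  | 0 => Atom z0
  | S k => Mg (Pn k (Gn k))
  end.

(* Strengthen the claim to: for all k < m, neither G_m <= G_k nor
   P_m(G_m) <= P_k(G_k), by induction on m.  Both inequalities force
   G_m <| P_j(G_j) for some j (through the right option P_(k-1)(G_(k-1)) of
   G_k, resp. the left option G_m of P_m(G_m)), and G_m <| P_j(G_j) in turn
   forces an earlier instance of one of the two inequalities.  What remains
   are the cases G_m <= 0, refuted by the left option 1 of G_m, and
   P_(k+1)(G_(k+1)) <= P_k(G_k): there the right options of P_(k+1) and P_k
   are star and -2 in some order, which are incomparable, and no G_n satisfies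
   G_n <| -1. *)

From Stdlib Require Import List Arith Lia.
Import ListNotations.

Section GameOrder.
Context {A : Type} {leA : A -> A -> Prop}.

Lemma gle_lefts {G H GL} : gle leA G H -> In GL (lefts G) -> glf leA GL H.
Proof. intros [? ? hL _ _]; auto. Qed.

Lemma gle_rights {G H HR} : gle leA G H -> In HR (rights H) -> glf leA G HR.
Proof. intros [? ? _ hR _]; auto. Qed.

Lemma glf_atom_atom a b : glf leA (Atom a) (Atom b) -> leA a b.
Proof. inversion 1; subst; simpl in *; tauto. Qed.

Lemma glf_comp_inv L R H :
  glf leA (Comp L R) H ->
  (exists GR, In GR R /\ gle leA GR H) \/
  (exists HL, In HL (lefts H) /\ gle leA (Comp L R) HL).
Proof. inversion 1; subst; eauto. Qed.

End GameOrder.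

Local Notation "G ≤ H" := (gle L5_le G H) (at level 70).
Local Notation "G ◁ H" := (glf L5_le G H) (at level 70).

Definition Pn_right (k : nat) : G5 := if Nat.odd k then Atom m2 else star.

Lemma Pn_comp k G : Pn k G = Comp [G] [Pn_right k].
Proof. unfold Pn, Pn_right; now destruct (Nat.odd k). Qed.

Lemma Gn_not_glf_m1 n : ~ Gn n ◁ Atom m1.
Proof.
  induction n as [|n IH]; intro h.
  - apply glf_atom_atom in h; compute in h; lia.
  - cbn [Gn Mg] in h.
    apply glf_comp_inv in h as [[GR [[<- | []] h]] | [HL [[] _]]].
    rewrite Pn_comp in h.
    apply IH, (gle_lefts h); now left.
Qed.

Lemma Pn_right_succ_not_le k : ~ Pn_right (S k) ≤ Pn_right k.
Proof.
  unfold Pn_right; rewrite Nat.odd_succ, <- Nat.negb_odd.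
  destruct (Nat.odd k); cbn; intro h.
  - apply (gle_lefts (GL := Atom m1)) in h; [|now left].
    apply glf_atom_atom in h; compute in h; lia.
  - apply (gle_rights (HR := Atom m3)) in h; [|now left].
    apply glf_atom_atom in h; compute in h; lia.
Qed.

Lemma Gn_succ_not_le_Gn0 n : ~ Gn (S n) ≤ Gn 0.
Proof.
  intro h. apply (gle_lefts (GL := Atom p1)) in h; [|now left].
  apply glf_atom_atom in h; compute in h; lia.
Qed.

Lemma Gn_succ_glf_Pn_inv m k :
  Gn (S m) ◁ Pn k (Gn k) -> Pn m (Gn m) ≤ Pn k (Gn k) \/ Gn (S m) ≤ Gn k.
Proof.
  intro h. apply glf_comp_inv in h as [[GR [[<- | []] h]] | [HL [i h]]]; auto.
  rewrite Pn_comp in i. destruct i as [<- | []]; auto.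
Qed.

Lemma Pn_succ_not_le k : ~ Pn (S k) (Gn (S k)) ≤ Pn k (Gn k).
Proof.
  intro h. apply (gle_rights (HR := Pn_right k)) in h; [|rewrite Pn_comp; now left].
  rewrite Pn_comp in h.
  apply glf_comp_inv in h as [[GR [[<- | []] h]] | [HL [i h]]].
  - exact (Pn_right_succ_not_le k h).
  - unfold Pn_right in i; destruct (Nat.odd k); cbn in i; [contradiction|].
    destruct i as [<- | []].
    apply (Gn_not_glf_m1 (S k)), (gle_lefts h); now left.
Qed.

Lemma Gn_Pn_not_le m :
  forall k, k < m -> ~ Gn m ≤ Gn k /\ ~ Pn m (Gn m) ≤ Pn k (Gn k).
Proof.
  induction m as [|m IH]; intros k hk; [lia|].
  assert (hG : forall j, j < S m -> ~ Gn (S m) ≤ Gn j).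
  { induction j as [|j IHj]; intros hj h; [exact (Gn_succ_not_le_Gn0 m h)|].
    apply (gle_rights (HR := Pn j (Gn j))) in h; [|now left].
    apply Gn_succ_glf_Pn_inv in h as [h | h].
    - exact (proj2 (IH j ltac:(lia)) h).
    - exact (IHj ltac:(lia) h). }
  split; [exact (hG k hk)|].
  destruct (Nat.eq_dec k m) as [-> | hkm]; [exact (Pn_succ_not_le m)|].
  intro h. apply (gle_lefts (GL := Gn (S m))) in h; [|rewrite Pn_comp; now left].
  apply Gn_succ_glf_Pn_inv in h as [h | h].
  - exact (proj2 (IH k ltac:(lia)) h).
  - exact (hG k hk h).
Qed.

Theorem lemma3p4 : forall n : nat, ~ gle L5_le (Gn (S n)) (Gn n).
Proof.
  intro n. exact (proj1 (Gn_Pn_not_le (S n) n (Nat.lt_succ_diag_r n))).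
Qed.
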